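(* Let $\Gamma$ be a set of triples about atomic actions, $b$ a test, $C$ a program and $(\varphi_n)_{n\in\mathbb N}$ assertions. If for every $n\in\mathbb N$: $\varphi_0\vDash\neg b$, $\varphi_{n+1}\vDash b$, and $\Gamma\vdash\{\varphi_{n+1}\}\ C\ \{\varphi_n\}$, then $\Gamma\vdash\{\bigcup_{n\in\mathbb N}\varphi_n\}\ \mathsf{while}\ b\ \mathsf{do}\ C\ \{\varphi_0\}$.
   Context: Partial semiring $\mathcal A=\langle U,+,\cdot,\mathbf 0,\mathbf 1\rangle$ ($+$ commutative, associative, possibly partial, unit $\mathbf 0$; $\cdot$ total, associative, unit $\mathbf 1$; two-sided distributivity; $\mathbf 0$ annihilates), naturally ordered, Scott continuous, with a top element; infinite sums are suprema of finite partial sums. $\mathcal W(\Sigma)$: maps $m:\Sigma\to U$ with countable support $\mathrm{supp}(m)=\{\sigma:m(\sigma)\ne\mathbf 0\}$ and defined mass; operations pointwise. $\eta(\sigma)$ is $\mathbf 1$ at $\sigma$ and $\mathbf 0$ elsewhere; $f^\dagger(m)(\tau)=\sum_{\sigma\in\mathrm{supp}(m)}m(\sigma)\cdot f(\sigma)(\tau)$. Programs over states $\Sigma$: $C::=\mathsf{skip}\mid C_1;C_2\mid C_1+C_2\mid\mathsf{assume}\ e\mid C^{\langle e,e'\rangle}\mid a$ with atomic actions $a$, $e$ a test $b$ (Boolean combination of $\mathsf{true},\mathsf{false}$ and primitive tests $t\subseteq\Sigma$, $[\![b]\!](\sigma)=\mathbf 1$ iff true, else $\mathbf 0$) or a weight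 $u\in U$; semantics $[\![\mathsf{skip}]\!](\sigma)=\eta(\sigma)$, $[\![C_1;C_2]\!](\sigma)=[\![C_2]\!]^\dagger([\![C_1]\!](\sigma))$, $[\![C_1+C_2]\!](\sigma)=[\![C_1]\!](\sigma)+[\![C_2]\!](\sigma)$, $[\![\mathsf{assume}\ e]\!](\sigma)=[\![e]\!](\sigma)\cdot\eta(\sigma)$, $[\![C^{\langle e,e'\rangle}]\!]$ the least fixed point of $\Phi(f)(\sigma)=[\![e]\!](\sigma)\cdot f^\dagger([\![C]\!](\sigma))+[\![e']\!](\sigma)\cdot\eta(\sigma)$. $\mathsf{while}\ b\ \mathsf{do}\ C$ abbreviates $C^{\langle b,\neg b\rangle}$. Assertions are subsets of $\mathcal W(\Sigma)$; $\varphi\vDash b$ means $[\![b]\!](\sigma)=\mathbf 1$ for all $m\in\varphi$ and $\sigma\in\mathrm{supp}(m)$ (and $\varphi\vDash\neg b$ means $[\![b]\!](\sigma)=\mathbf 0$ for all such $\sigma$). $\bigoplus_{x\in T}\phi(x)=\{\sum_{t\in T}m_t:m_t\in\phi(t)\ \forall t\}$, $\varphi\oplus\psi$ the binary case, $u\odot\varphi=\{u\cdot m:m\in\varphi\}$, $\varphi\odot u=\{m\cdot u:m\in\varphi\}$. $\Gamma\vdash\{\varphi\}C\{\psi\}$ means derivable from axioms in $\Gamma$ using: (Skip) $\{\varphi\}\mathsf{skip}\{\varphi\}$; (Seq) $\{\varphi\}C_1\{\vartheta\},\{\vartheta\}C_2\{\psi\}\Rightarrow\{\varphi\}C_1;C_2\{\psi\}$;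 (Plus) $\{\varphi\}C_1\{\psi_1\},\{\varphi\}C_2\{\psi_2\}\Rightarrow\{\varphi\}C_1+C_2\{\psi_1\oplus\psi_2\}$; (Assume) if $[\![e]\!](\sigma)=u$ for all $m\in\varphi,\sigma\in\mathrm{supp}(m)$ then $\{\varphi\}\mathsf{assume}\ e\{\varphi\odot u\}$; (Iter) if $(\psi_n)$ converges to $\psi_\infty$ (whenever $m_n\in\psi_n$ for all $n$, $\sum_n m_n\in\psi_\infty$) and for all $n$, $\{\varphi_n\}\mathsf{assume}\ e;C\{\varphi_{n+1}\}$ and $\{\varphi_n\}\mathsf{assume}\ e'\{\psi_n\}$, then $\{\varphi_0\}C^{\langle e,e'\rangle}\{\psi_\infty\}$; (False) $\{\emptyset\}C\{\varphi\}$; (True) $\{\varphi\}C\{\mathcal W(\Sigma)\}$; (Scale) $\{\varphi\}C\{\psi\}\Rightarrow\{u\odot\varphi\}C\{u\odot\psi\}$; (Disj), (Conj): from two triples infer the triple with $\cup$, resp. $\cap$, of pre- and postconditions; (Choice) $\forall t\in T.\{\phi(t)\}C\{\phi'(t)\}\Rightarrow\{\bigoplus_{x\in T}\phi(x)\}C\{\bigoplus_{x\in T}\phi'(x)\}$; (Exists) same premises $\Rightarrow\{\bigcup_t\phi(t)\}C\{\bigcup_t\phi'(t)\}$; (Consequence) $\varphi'\subseteq\varphi$, $\{\varphi\}C\{\psi\}$, $\psi\subseteq\psi'\Rightarrow\{\varphi'\}C\{\psi'\}$. *)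

From Stdlib Require Import List ClassicalEpsilon.
Import ListNotations.
Set Implicit Arguments.
Unset Strict Implicit.

Definition obind {X Y : Type} (o : option X) (f : X -> option Y) : option Y :=
  match o with Some x => f x | None => None end.

Definition nat_le {U : Type} (add : U -> U -> option U) (u v : U) : Prop :=
  exists w, add u w = Some v.

Definition is_lub {U : Type} (le : U -> U -> Prop) (D : U -> Prop) (s : U) : Prop :=
  (forall v, D v -> le v s) /\ (forall w, (forall v, D v -> le v w) -> le s w).

Definition directed {U : Type} (le : U -> U -> Prop) (D : U -> Prop) : Prop :=
  (exists d, D d) /\
  (forall x y, D x -> D y -> exists z, D z /\ le x z /\ le y z).

Record psemiring := PSemiring {
  ps_car :> Type;
  ps_add : ps_car -> ps_car -> option ps_car;
  ps_mul : ps_car -> ps_car -> ps_car;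
  ps_zero : ps_car;
  ps_one : ps_car;
  ps_add_comm : forall u v, ps_add u v = ps_add v u;
  ps_add_assoc : forall u v w,
      obind (ps_add u v) (fun x => ps_add x w) =
      obind (ps_add v w) (fun y => ps_add u y);
  ps_add_0l : forall u, ps_add ps_zero u = Some u;
  ps_mul_assoc : forall u v w, ps_mul u (ps_mul v w) = ps_mul (ps_mul u v) w;
  ps_mul_1l : forall u, ps_mul ps_one u = u;
  ps_mul_1r : forall u, ps_mul u ps_one = u;
  ps_mul_addl : forall u v w x, ps_add v w = Some x ->
      ps_add (ps_mul u v) (ps_mul u w) = Some (ps_mul u x);
  ps_mul_addr : forall u v w x, ps_add v w = Some x ->
      ps_add (ps_mul v u) (ps_mul w u) = Some (ps_mul x u);
  ps_mul_0l : forall u, ps_mul ps_zero u = ps_zero;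
  ps_mul_0r : forall u, ps_mul u ps_zero = ps_zero;
  ps_le_antisym : forall u v, nat_le ps_add u v -> nat_le ps_add v u -> u = v;
  ps_dcpo : forall D, directed (nat_le ps_add) D ->
      exists s, is_lub (nat_le ps_add) D s;
  ps_mul_contl : forall u D s, directed (nat_le ps_add) D ->
      is_lub (nat_le ps_add) D s ->
      is_lub (nat_le ps_add) (fun v => exists d, D d /\ v = ps_mul u d) (ps_mul u s);
  ps_mul_contr : forall u D s, directed (nat_le ps_add) D ->
      is_lub (nat_le ps_add) D s ->
      is_lub (nat_le ps_add) (fun v => exists d, D d /\ v = ps_mul d u) (ps_mul s u);
  ps_add_cont : forall u D s, directed (nat_le ps_add) D ->
      is_lub (nat_le ps_add) D s ->
      (forall d, D d -> exists v, ps_add u d = Some v) ->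
      exists t, ps_add u s = Some t /\
        is_lub (nat_le ps_add) (fun v => exists d, D d /\ ps_add u d = Some v) t;
  ps_top : exists t, forall u, nat_le ps_add u t
}.

Arguments ps_add {p}.
Arguments ps_mul {p}.
Arguments ps_zero {p}.
Arguments ps_one {p}.

Section Sums.
Variable A : psemiring.

Fixpoint fsum {T : Type} (f : T -> A) (l : list T) : option A :=
  match l with
  | [] => Some ps_zero
  | x :: l' => obind (fsum f l') (fun s => ps_add (f x) s)
  end.

Definition has_sum_on {T : Type} (P : T -> Prop) (f : T -> A) (s : A) : Prop :=
  (forall l, NoDup l -> Forall P l -> fsum f l <> None) /\
  is_lub (nat_le (@ps_add A))
    (fun v => exists l, NoDup l /\ Forall P l /\ fsum f l = Some v) s.

End Sums.

Definition supp {A : psemiring} {St : Type} (m : St -> A) (s : St) : Prop :=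
  m s <> ps_zero.

Record weighting (A : psemiring) (St : Type) := Weighting {
  wfun :> St -> A;
  w_countable : exists g : nat -> option St,
      forall s, supp wfun s -> exists n, g n = Some s;
  w_mass : exists t, has_sum_on (supp wfun) wfun t
}.

Definition assertion (A : psemiring) (St : Type) := weighting A St -> Prop.

Section Assertions.
Variables (A : psemiring) (St : Type).

Definition wsum {T : Type} (ms : T -> weighting A St) (m : weighting A St) : Prop :=
  forall s, has_sum_on (fun _ : T => True) (fun t => ms t s) (m s).

Definition wadd (m1 m2 m : weighting A St) : Prop :=
  forall s, ps_add (m1 s) (m2 s) = Some (m s).

Definition aoplus (phi psi : assertion A St) : assertion A St :=
  fun m => exists m1 m2, phi m1 /\ psi m2 /\ wadd m1 m2 m.

Definition abigoplus (T : Type) (phi : T -> assertion A St) : assertion A St :=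
  fun m => exists ms : T -> weighting A St, (forall t, phi t (ms t)) /\ wsum ms m.

Definition lscale (u : A) (phi : assertion A St) : assertion A St :=
  fun m => exists m0, phi m0 /\ forall s, m s = ps_mul u (m0 s).

Definition rscale (phi : assertion A St) (u : A) : assertion A St :=
  fun m => exists m0, phi m0 /\ forall s, m s = ps_mul (m0 s) u.

Definition aunion (phi psi : assertion A St) : assertion A St :=
  fun m => phi m \/ psi m.
Definition ainter (phi psi : assertion A St) : assertion A St :=
  fun m => phi m /\ psi m.
Definition abigunion (T : Type) (phi : T -> assertion A St) : assertion A St :=
  fun m => exists t, phi t m.
Definition asub (phi psi : assertion A St) : Prop := forall m, phi m -> psi m.
Definition aempty : assertion A St := fun _ => False.
Definition afull : assertion A St := fun _ => True.

Definition converges (psis : nat -> assertion A St) (psiinf : assertion A St) : Prop :=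
  forall ms : nat -> weighting A St, (forall n, psis n (ms n)) ->
    exists m, wsum ms m /\ psiinf m.

End Assertions.

Inductive test (St : Type) :=
| TTrue | TFalse
| TPrim (t : St -> Prop)
| TNot (b : test St)
| TAnd (b1 b2 : test St)
| TOr (b1 b2 : test St).

Arguments TTrue {St}.
Arguments TFalse {St}.

Fixpoint test_holds {St : Type} (b : test St) (s : St) : Prop :=
  match b with
  | TTrue => True
  | TFalse => False
  | TPrim t => t s
  | TNot b => ~ test_holds b s
  | TAnd b1 b2 => test_holds b1 s /\ test_holds b2 s
  | TOr b1 b2 => test_holds b1 s \/ test_holds b2 s
  end.

Definition test_val {A : psemiring} {St : Type} (b : test St) (s : St) : A :=
  if excluded_middle_informative (test_holds b s) then ps_one else ps_zero.

Inductive guard (A : psemiring) (St : Type) :=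
| GTest (b : test St)
| GWeight (u : A).
Arguments GTest {A St}.
Arguments GWeight {A St}.

Definition guard_val {A : psemiring} {St : Type} (e : guard A St) (s : St) : A :=
  match e with GTest b => test_val b s | GWeight u => u end.

Inductive prog (A : psemiring) (St Atom : Type) :=
| PSkip
| PSeq (C1 C2 : prog A St Atom)
| PPlus (C1 C2 : prog A St Atom)
| PAssume (e : guard A St)
| PIter (C : prog A St Atom) (e e' : guard A St)
| PAtom (a : Atom).

Arguments PSkip {A St Atom}.
Arguments PSeq {A St Atom}.
Arguments PPlus {A St Atom}.
Arguments PAssume {A St Atom}.
Arguments PIter {A St Atom}.
Arguments PAtom {A St Atom}.

Definition PWhile {A : psemiring} {St Atom : Type} (b : test St) (C : prog A St Atom)
  : prog A St Atom := PIter C (@GTest A St b) (@GTest A St (TNot b)).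

Definition models {A : psemiring} {St : Type} (phi : assertion A St) (b : test St) : Prop :=
  forall m, phi m -> forall s, supp m s -> @test_val A St b s = ps_one.

Section Derivable.
Variables (A : psemiring) (St Atom : Type).
Variable Gamma : Atom -> assertion A St -> assertion A St -> Prop.

Inductive derivable : assertion A St -> prog A St Atom -> assertion A St -> Prop :=
| R_Ax : forall a phi psi, Gamma a phi psi -> derivable phi (PAtom a) psi
| R_Skip : forall phi, derivable phi PSkip phi
| R_Seq : forall phi th psi C1 C2,
    derivable phi C1 th -> derivable th C2 psi -> derivable phi (PSeq C1 C2) psi
| R_Plus : forall phi psi1 psi2 C1 C2,
    derivable phi C1 psi1 -> derivable phi C2 psi2 ->
    derivable phi (PPlus C1 C2) (aoplus psi1 psi2)
| R_Assume : forall phi e u,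
    (forall m, phi m -> forall s, supp m s -> guard_val e s = u) ->
    derivable phi (PAssume e) (rscale phi u)
| R_Iter : forall (phis psis : nat -> assertion A St) psiinf C e e',
    converges psis psiinf ->
    (forall n, derivable (phis n) (PSeq (PAssume e) C) (phis (S n))) ->
    (forall n, derivable (phis n) (PAssume e') (psis n)) ->
    derivable (phis 0) (PIter C e e') psiinf
| R_False : forall C phi, derivable (@aempty A St) C phi
| R_True : forall C phi, derivable phi C (@afull A St)
| R_Scale : forall u phi C psi, derivable phi C psi ->
    derivable (lscale u phi) C (lscale u psi)
| R_Disj : forall phi1 phi2 psi1 psi2 C,
    derivable phi1 C psi1 -> derivable phi2 C psi2 ->
    derivable (aunion phi1 phi2) C (aunion psi1 psi2)
| R_Conj : forall phi1 phi2 psi1 psi2 C,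
    derivable phi1 C psi1 -> derivable phi2 C psi2 ->
    derivable (ainter phi1 phi2) C (ainter psi1 psi2)
| R_Choice : forall (T : Type) (phi phi' : T -> assertion A St) C,
    (forall t, derivable (phi t) C (phi' t)) ->
    derivable (abigoplus phi) C (abigoplus phi')
| R_Exists : forall (T : Type) (phi phi' : T -> assertion A St) C,
    (forall t, derivable (phi t) C (phi' t)) ->
    derivable (abigunion phi) C (abigunion phi')
| R_Cons : forall phi phi' psi psi' C,
    asub phi' phi -> derivable phi C psi -> asub psi psi' ->
    derivable phi' C psi'.

End Derivable.

(** For fixed k, apply [R_Iter] with the invariants phi k, phi (k-1), ...,
    phi 0, followed by zero weightings from then on.  The guard b has weight 1
    on every phi (S j) and weight 0 on phi 0, so each pass through the body
    moves to the next invariant, the pass from phi 0 yields zero weightings,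
    and zero weightings stay zero.  Thus every exit is zero except the k-th,
    which lies in phi 0, and a family with a single nonzero term sums to that
    term.  [R_Exists] then combines the triples for all k. *)

From Stdlib Require Import List ClassicalEpsilon FunctionalExtensionality ProofIrrelevance Arith Lia.
Import ListNotations.

Section Sums.
Context {A : psemiring}.

Lemma ps_add_0r (u : A) : ps_add u ps_zero = Some u.
Proof. rewrite ps_add_comm; apply ps_add_0l. Qed.

Lemma fsum_supported_at (f : nat -> A) k l :
  (forall n, n <> k -> f n = ps_zero) -> NoDup l ->
  fsum f l = Some (if in_dec Nat.eq_dec k l then f k else ps_zero).
Proof.
  intros Hf Hl; induction Hl as [|x l Hx Hl IH]; simpl; [reflexivity|].
  rewrite IH; destruct (Nat.eq_dec x k) as [->|Hne].
  - destruct (in_dec Nat.eq_dec k l); [contradiction|].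
    apply ps_add_0r.
  - rewrite (Hf x Hne); simpl; rewrite ps_add_0l.
    destruct (in_dec Nat.eq_dec k l); reflexivity.
Qed.

Lemma has_sum_supported_at (f : nat -> A) k :
  (forall n, n <> k -> f n = ps_zero) -> has_sum_on (fun _ => True) f (f k).
Proof.
  intros Hf; split.
  - intros l Hl _; rewrite (fsum_supported_at f k l Hf Hl); discriminate.
  - split.
    + intros v [l [Hl [_ Hs]]].
      rewrite (fsum_supported_at f k l Hf Hl) in Hs; injection Hs as <-.
      destruct (in_dec Nat.eq_dec k l).
      * exists ps_zero; apply ps_add_0r.
      * exists (f k); apply ps_add_0l.
    + intros w Hw; apply Hw; exists [k]; split; [repeat constructor; auto|].
      split; [repeat constructor|]; apply ps_add_0r.
Qed.

End Sums.

Section Assertions.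
Context {A : psemiring} {St : Type}.

Lemma weighting_ext (m1 m2 : weighting A St) : (forall s, m1 s = m2 s) -> m1 = m2.
Proof.
  destruct m1 as [f1 c1 h1], m2 as [f2 c2 h2]; simpl; intros H.
  assert (f1 = f2) by (apply functional_extensionality; auto); subst f2.
  now rewrite (proof_irrelevance _ c1 c2), (proof_irrelevance _ h1 h2).
Qed.

Definition azero : assertion A St := fun m => forall s, m s = ps_zero.

Lemma azero_lscale : asub azero (lscale ps_zero (@afull A St)).
Proof.
  intros m Hm; exists m; split; [exact I|].
  intros s; now rewrite Hm, ps_mul_0l.
Qed.

Lemma lscale_zero_sub (phi : assertion A St) : asub (lscale ps_zero phi) azero.
Proof. intros m [m0 [_ Hm]] s; rewrite Hm; apply ps_mul_0l. Qed.

Lemma rscale_zero_sub (phi : assertion A St) : asub (rscale phi ps_zero) azero.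
Proof. intros m [m0 [_ Hm]] s; rewrite Hm; apply ps_mul_0r. Qed.

Lemma rscale_one_sub (phi : assertion A St) : asub (rscale phi ps_one) phi.
Proof.
  intros m [m0 [Hm0 Hm]].
  replace m with m0; [exact Hm0|].
  apply weighting_ext; intros s; now rewrite Hm, ps_mul_1r.
Qed.

Lemma converges_supported_at (psi : assertion A St) k :
  converges (fun n => if n =? k then psi else azero) psi.
Proof.
  intros ms Hms; exists (ms k); split.
  - intros s; apply (has_sum_supported_at (fun n => ms n s)).
    intros n Hn; specialize (Hms n); simpl in Hms.
    rewrite (proj2 (Nat.eqb_neq n k) Hn) in Hms; apply Hms.
  - specialize (Hms k); simpl in Hms; now rewrite Nat.eqb_refl in Hms.
Qed.

Lemma test_val_not_one (b : test St) s :
  @test_val A St (TNot b) s = ps_one -> @test_val A St b s = ps_zero.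
Proof.
  unfold test_val; simpl.
  destruct (excluded_middle_informative (test_holds b s));
    destruct (excluded_middle_informative (~ test_holds b s)); auto; tauto.
Qed.

Lemma test_val_one_not (b : test St) s :
  @test_val A St b s = ps_one -> @test_val A St (TNot b) s = ps_zero.
Proof.
  unfold test_val; simpl.
  destruct (excluded_middle_informative (test_holds b s));
    destruct (excluded_middle_informative (~ test_holds b s)); auto; tauto.
Qed.

End Assertions.

Section DerivedRules.
Variables (A : psemiring) (St Atom : Type).
Variable Gamma : Atom -> assertion A St -> assertion A St -> Prop.

(* The premise of [R_Assume] is typed with [phi : (St -> A) -> Prop], so its
   precondition is [phi] composed with the coercion [wfun]; a general assertion
   is transported along [wfun], which is injective by [weighting_ext]. *)
Lemma derivable_assume (phi : assertion A St) e u :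
  (forall m, phi m -> forall s, supp m s -> guard_val e s = u) ->
  derivable Gamma phi (PAssume e) (rscale phi u).
Proof.
  intros Hphi.
  set (phi' := fun f : St -> A => exists m : weighting A St, wfun m = f /\ phi m).
  apply R_Cons with (phi := fun x : weighting A St => phi' x)
                    (psi := rscale (fun x : weighting A St => phi' x) u).
  - intros m Hm; now exists m.
  - apply R_Assume; intros f [m [<- Hm]]; apply Hphi, Hm.
  - intros m [m0 [[m1 [E Hm1]] Hs]]; exists m0; split; [|exact Hs].
    replace m0 with m1; [exact Hm1|].
    apply weighting_ext; intros s; now rewrite E.
Qed.

Lemma derivable_assume_pass (phi : assertion A St) e :
  (forall m, phi m -> forall s, supp m s -> guard_val e s = ps_one) ->
  derivable Gamma phi (PAssume e) phi.
Proof.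
  intros He; eapply R_Cons; [intros m Hm; exact Hm | | apply rscale_one_sub].
  now apply derivable_assume.
Qed.

Lemma derivable_assume_block (phi : assertion A St) e :
  (forall m, phi m -> forall s, supp m s -> guard_val e s = ps_zero) ->
  derivable Gamma phi (PAssume e) azero.
Proof.
  intros He; eapply R_Cons; [intros m Hm; exact Hm | | apply rscale_zero_sub].
  now apply derivable_assume.
Qed.

Lemma derivable_assume_azero e : derivable Gamma azero (PAssume e) azero.
Proof.
  apply derivable_assume_block; intros m Hm s Hs.
  exfalso; apply Hs, Hm.
Qed.

Lemma derivable_azero C : derivable Gamma azero C azero.
Proof.
  eapply R_Cons; [apply azero_lscale | | apply lscale_zero_sub].
  apply R_Scale, R_True.
Qed.

End DerivedRules.

Section Unrolling.
Variables (A : psemiring) (St Atom : Type).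
Variable Gamma : Atom -> assertion A St -> assertion A St -> Prop.
Variables (b : test St) (C : prog A St Atom) (phi : nat -> assertion A St).
Hypothesis phi0_exit : models (phi 0) (TNot b).
Hypothesis phiS_enter : forall n, models (phi (S n)) b.
Hypothesis body : forall n, derivable Gamma (phi (S n)) C (phi n).

Definition unroll_inv (k n : nat) : assertion A St :=
  if n <=? k then phi (k - n) else azero.

Definition unroll_exit (k n : nat) : assertion A St :=
  if n =? k then phi 0 else azero.

Lemma unroll_inv_le k n : n <= k -> unroll_inv k n = phi (k - n).
Proof. intros Hle; unfold unroll_inv; now rewrite (proj2 (Nat.leb_le n k)). Qed.

Lemma unroll_inv_gt k n : k < n -> unroll_inv k n = azero.
Proof. intros Hgt; unfold unroll_inv; now rewrite (proj2 (Nat.leb_gt n k)). Qed.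

Lemma unroll_exit_neq k n : n <> k -> unroll_exit k n = azero.
Proof. intros Hne; unfold unroll_exit; now rewrite (proj2 (Nat.eqb_neq n k)). Qed.

Lemma unroll_step k n :
  derivable Gamma (unroll_inv k n) (PSeq (PAssume (GTest b)) C) (unroll_inv k (S n)).
Proof.
  destruct (Nat.lt_total n k) as [Hlt|[->|Hgt]].
  - rewrite (unroll_inv_le k n), (unroll_inv_le k (S n)) by lia.
    replace (k - n) with (S (k - S n)) by lia.
    apply R_Seq with (th := phi (S (k - S n))); [|apply body].
    apply derivable_assume_pass; intros m Hm s Hs; eapply phiS_enter; eauto.
  - rewrite (unroll_inv_le k k), Nat.sub_diag, unroll_inv_gt by lia.
    apply R_Seq with (th := azero); [|apply derivable_azero].
    apply derivable_assume_block; intros m Hm s Hs.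
    apply test_val_not_one; eapply phi0_exit; eauto.
  - rewrite !unroll_inv_gt by lia.
    apply R_Seq with (th := azero); [apply derivable_assume_azero | apply derivable_azero].
Qed.

Lemma unroll_leave k n :
  derivable Gamma (unroll_inv k n) (PAssume (GTest (TNot b))) (unroll_exit k n).
Proof.
  destruct (Nat.lt_total n k) as [Hlt|[->|Hgt]].
  - rewrite (unroll_inv_le k n), unroll_exit_neq by lia.
    replace (k - n) with (S (k - S n)) by lia.
    apply derivable_assume_block; intros m Hm s Hs.
    apply test_val_one_not; eapply phiS_enter; eauto.
  - unfold unroll_exit; rewrite (unroll_inv_le k k), Nat.sub_diag, Nat.eqb_refl by lia.
    apply derivable_assume_pass; intros m Hm s Hs; eapply phi0_exit; eauto.
  - rewrite unroll_inv_gt, unroll_exit_neq by lia.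
    apply derivable_assume_azero.
Qed.

Lemma derivable_while_unrolled k : derivable Gamma (phi k) (PWhile b C) (phi 0).
Proof.
  eapply R_Cons with (phi := unroll_inv k 0); [| | intros m Hm; exact Hm].
  - intros m Hm; rewrite (unroll_inv_le k 0), Nat.sub_0_r by lia; exact Hm.
  - apply R_Iter with (psis := unroll_exit k).
    + apply converges_supported_at.
    + apply unroll_step.
    + apply unroll_leave.
Qed.

End Unrolling.

Theorem lemmaE12 (A : psemiring) (St Atom : Type)
  (Gamma : Atom -> assertion A St -> assertion A St -> Prop)
  (b : test St) (C : prog A St Atom) (phi : nat -> assertion A St) :
  (forall n : nat,
      models (phi 0) (TNot b) /\
      models (phi (S n)) b /\
      derivable Gamma (phi (S n)) C (phi n)) ->
  derivable Gamma (abigunion phi) (PWhile b C) (phi 0).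
Proof.
  intros H.
  assert (phi0_exit : models (phi 0) (TNot b)) by apply (H 0).
  assert (phiS_enter : forall n, models (phi (S n)) b) by (intros n; apply (H n)).
  assert (body : forall n, derivable Gamma (phi (S n)) C (phi n)) by (intros n; apply (H n)).
  apply R_Cons with (phi := abigunion phi) (psi := abigunion (fun _ : nat => phi 0)).
  - intros m Hm; exact Hm.
  - apply R_Exists; intros k.
    now apply derivable_while_unrolled.
  - intros m [_ Hm]; exact Hm.
Qed.
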